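(* Let $N\ge1$, $K>0$, $r_i>0$, let $(\mu_{ij})$ be a nonnegative, symmetric, irreducible $N\times N$ matrix, and let $\alpha:\mathbb{R}^N\to\mathbb{R}$ be locally Lipschitz with $\alpha(0)=0$, monotone increasing for the componentwise order, and such that there exist positive $R,k,c$ with $c(\sum_jv_j)^k\le\alpha(v)$ for all $v\in[0,\infty)^N$ with $\sum_j|v_j|\ge R$. Let $\bar v$ be the unique positive stationary solution of $$\frac{dv_i}{dt}=v_i\left[r_i-\frac{1}{K}\alpha(v)\right]+\sum_{j=1}^N\mu_{ij}(v_j-v_i),\qquad i=1,\dots,N,$$ and let $v(t)$ be a positive solution of this system defined for all $t\ge0$. Set $\mathcal{E}(v)=\sum_{i=1}^Nv_i^2$ and $\beta(v)=\sum_{i=1}^Nv_i\bar v_i$. Then there exists a constant $C_1$ such that $\mathcal{E}(v(t))+\beta(v(t))\le C_1$ for all $t\ge0$.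
   Context: A stationary solution is a vector at which the right-hand side vanishes for every $i$; positive means all components strictly positive. *)

From HB Require Import structures.
From mathcomp Require Import all_boot all_order all_algebra.
From mathcomp Require Import all_classical all_reals all_analysis.
Set Implicit Arguments. Unset Strict Implicit. Unset Printing Implicit Defensive.
Import Order.TTheory GRing.Theory Num.Theory.
Import numFieldNormedType.Exports.
Local Open Scope classical_set_scope.
Local Open Scope ring_scope.

Definition mx_nonneg (R : realType) (N : nat) (mu : 'I_N -> 'I_N -> R) :=
  forall i j, 0 <= mu i j.

Definition mx_symmetric (R : realType) (N : nat) (mu : 'I_N -> 'I_N -> R) :=
  forall i j, mu i j = mu j i.

(* Irreducible (nonnegative) matrix: its directed graph (edge i -> j iff
   mu i j > 0) is strongly connected. *)
Definition mx_irreducible (R : realType) (N : nat) (mu : 'I_N -> 'I_N -> R) :=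
  forall i j, connect (fun a b => 0 < mu a b) i j.

Definition loc_lipschitz (R : realType) (N : nat) (alpha : ('I_N -> R) -> R) :=
  forall x : 'I_N -> R, exists2 rho : R, 0 < rho & exists L : R,
    forall y z : 'I_N -> R,
      \sum_i `|y i - x i| < rho -> \sum_i `|z i - x i| < rho ->
      `|alpha y - alpha z| <= L * \sum_i `|y i - z i|.

Definition comp_monotone (R : realType) (N : nat) (alpha : ('I_N -> R) -> R) :=
  forall x y : 'I_N -> R, (forall i, x i <= y i) -> alpha x <= alpha y.

Definition rhs (R : realType) (N : nat) (K : R) (r : 'I_N -> R)
  (mu : 'I_N -> 'I_N -> R) (alpha : ('I_N -> R) -> R) (v : 'I_N -> R) (i : 'I_N) : R :=
  v i * (r i - K^-1 * alpha v) + \sum_j mu i j * (v j - v i).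

Definition pos_stationary (R : realType) (N : nat) (K : R) (r : 'I_N -> R)
  (mu : 'I_N -> 'I_N -> R) (alpha : ('I_N -> R) -> R) (w : 'I_N -> R) :=
  (forall i, 0 < w i) /\ (forall i, rhs K r mu alpha w i = 0).

Definition pos_solution (R : realType) (N : nat) (K : R) (r : 'I_N -> R)
  (mu : 'I_N -> 'I_N -> R) (alpha : ('I_N -> R) -> R) (v : R -> 'I_N -> R) :=
  (forall t : R, 0 <= t -> forall i, 0 < v t i) /\
  (forall t : R, 0 < t -> forall i : 'I_N,
      is_derive t 1 (fun s => v s i) (rhs K r mu alpha (v t) i)) /\
  (forall i : 'I_N, (fun s : R => v s i) @ (0:R)^'+ --> v 0 i).

From HB Require Import structures.
From mathcomp Require Import all_boot all_order all_algebra.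
From mathcomp Require Import all_classical all_reals all_analysis.
Set Implicit Arguments.
Unset Strict Implicit.
Unset Printing Implicit Defensive.
Import Order.TTheory GRing.Theory Num.Theory.
Import numFieldNormedType.Exports.
Local Open Scope classical_set_scope.
Local Open Scope ring_scope.

(* The total mass S = sum_i v_i carries the argument.  Since mu is symmetric,
   migration cancels in dS/dt = sum_i v_i r_i - alpha(v) S / K, and the growth
   bound alpha(v) >= c S^k makes dS/dt negative once S exceeds an explicit
   threshold; hence S stays below max(S(0), threshold).  Both E(v) and beta(v)
   are bounded by S times a constant. *)

Lemma sum_mul_le_mul_sum (R : numDomainType) N (w u : 'I_N -> R) :
  (forall i, 0 <= w i) -> (forall i, 0 <= u i) ->
  \sum_i w i * u i <= (\sum_i w i) * \sum_i u i.
Proof.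
move=> w_ge0 u_ge0; rewrite mulr_suml; apply: ler_sum => i _.
apply: ler_wpM2l => //.
by rewrite (bigD1 i) //= lerDl sumr_ge0.
Qed.

Lemma sum_migration_eq0 (R : comPzRingType) N (mu : 'I_N -> 'I_N -> R)
    (w : 'I_N -> R) :
  (forall i j, mu i j = mu j i) -> \sum_i \sum_j mu i j * (w j - w i) = 0.
Proof.
move=> mu_sym.
have split_row i : \sum_j mu i j * (w j - w i)
    = \sum_j mu i j * w j - \sum_j mu i j * w i.
  by rewrite -sumrB; apply: eq_bigr => j _; rewrite mulrBr.
rewrite (eq_bigr _ (fun i _ => split_row i)) sumrB exchange_big /=.
apply/eqP; rewrite subr_eq0; apply/eqP.
by apply: eq_bigr => i _; apply: eq_bigr => j _; rewrite mu_sym.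
Qed.

Lemma lt_powR_of_root (R : realType) (a x k : R) :
  0 <= a -> 0 < k -> a `^ k^-1 < x -> a < x `^ k.
Proof.
move=> a_ge0 k_gt0 root_lt_x.
have root_ge0 : 0 <= a `^ k^-1 by exact: powR_ge0.
have -> : a = (a `^ k^-1) `^ k by rewrite -powRrM mulVf ?gt_eqF ?powRr1.
by apply: gt0_ltr_powR; rewrite // ?inE ?nnegrE // (le_trans root_ge0 (ltW root_lt_x)).
Qed.

Section TotalMass.
Variables (R : realType) (N : nat) (K : R) (r : 'I_N -> R).
Variables (mu : 'I_N -> 'I_N -> R) (alpha : ('I_N -> R) -> R).
Hypothesis mu_sym : mx_symmetric mu.

Lemma sum_rhs (w : 'I_N -> R) :
  \sum_i rhs K r mu alpha w i = \sum_i w i * r i - K^-1 * alpha w * \sum_i w i.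
Proof.
rewrite /rhs big_split /= sum_migration_eq0 // addr0 mulr_sumr -sumrB.
by apply: eq_bigr => i _; rewrite mulrBr [w i * (_ * _)]mulrC.
Qed.

Variables (R0 k c : R).
Hypotheses (K_gt0 : 0 < K) (r_ge0 : forall i, 0 <= r i).
Hypotheses (k_gt0 : 0 < k) (c_gt0 : 0 < c).
Hypothesis alpha_growth : forall w : 'I_N -> R, (forall j, 0 <= w j) ->
  R0 <= \sum_j `|w j| -> c * (\sum_j w j) `^ k <= alpha w.

Definition mass_threshold := Num.max R0 ((K * (\sum_i r i) / c) `^ k^-1).

Lemma sum_rhs_lt0 (w : 'I_N -> R) : (forall i, 0 <= w i) ->
  mass_threshold < \sum_i w i -> \sum_i rhs K r mu alpha w i < 0.
Proof.
set S := \sum_i w i; set rs := \sum_i r i.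
move=> w_ge0; rewrite gt_max => /andP[R0_lt_S root_lt_S].
have rs_ge0 : 0 <= rs by exact: sumr_ge0.
have S_gt0 : 0 < S by apply: le_lt_trans root_lt_S; exact: powR_ge0.
have alpha_ge : c * S `^ k <= alpha w.
  apply: alpha_growth => //; rewrite (eq_bigr w) ?ltW // => j _.
  exact: ger0_norm.
have Krs_c_lt : K * rs / c < S `^ k.
  by apply: lt_powR_of_root => //; rewrite divr_ge0 ?mulr_ge0 // ltW.
have Krs_lt : K * rs < c * S `^ k by rewrite [c * _]mulrC -ltr_pdivrMr.
have rs_lt : rs < K^-1 * alpha w.
  by rewrite ltr_pdivlMl // (lt_le_trans Krs_lt alpha_ge).
rewrite sum_rhs subr_lt0 (le_lt_trans (sum_mul_le_mul_sum w_ge0 r_ge0)) //.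
by rewrite mulrC ltr_pM2r.
Qed.

End TotalMass.

Section DecreasingAboveLevel.
Variables (R : realType) (f df : R -> R) (M : R).
Hypothesis f_derive : forall t : R, 0 < t -> is_derive t 1 f (df t).
Hypothesis df_lt0_above : forall t : R, 0 < t -> M < f t -> df t < 0.

Let f_cont (t : R) : 0 < t -> f @ t --> f t.
Proof.
move=> t_gt0; apply/differentiable_continuous; rewrite -derivable1_diffP.
by have [] := f_derive t_gt0.
Qed.

Lemma gt_left_of_derive_lt0 (s : R) : 0 < s -> M < f s ->
  exists2 x, 0 < x < s & f s < f x.
Proof.
move=> s_gt0 M_lt_fs.
have [e /= e_gt0 above_M] : nbhs_ball s (fun x => M < f x).
  by apply/nbhs_ballP; exact: cvgr_gt (f_cont s_gt0) _ M_lt_fs.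
(* On [s - d, s] f stays above M, so the MVT makes it decrease there. *)
pose d := Num.min (e / 2) (s / 2).
have d_gt0 : 0 < d by rewrite lt_min !divr_gt0.
have d_lt_e : d < e by rewrite gt_min ltr_pdivrMr // ltr_pMr // ltr1n.
have sd_gt0 : 0 < s - d.
  by rewrite subr_gt0 gt_min [s / 2 < s]ltr_pdivrMr // ltr_pMr // ltr1n orbT.
have sd_lt_s : s - d < s by rewrite ltrBlDr ltrDl.
have f_cont_sd : {within `[s - d, s], continuous f}.
  apply: derivable_within_continuous => x; rewrite in_itv /= => /andP[sd_le_x _].
  by have [] := f_derive (lt_le_trans sd_gt0 sd_le_x).
have [x] := MVT sd_lt_s (fun x x_in => f_derive (lt_trans sd_gt0 (andP x_in).1))
  f_cont_sd.
rewrite in_itv /= => /andP[sd_lt_x x_lt_s] f_mvt.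
have M_lt_fx : M < f x.
  apply: above_M; rewrite /ball /= ger0_norm ?subr_ge0 ?ltW //.
  by apply: lt_trans d_lt_e; rewrite ltrBlDr -ltrBlDl.
exists (s - d); first by rewrite sd_gt0.
rewrite -subr_gt0 -opprB f_mvt oppr_gt0 pmulr_llt0 ?subr_gt0 //.
exact: df_lt0_above (lt_trans sd_gt0 sd_lt_x) M_lt_fx.
Qed.

Lemma le_bound_of_derive_lt0_above (m : R) : f @ (0:R)^'+ --> f 0 ->
  f 0 <= m -> M <= m -> forall t, 0 <= t -> f t <= m.
Proof.
move=> f_cont0 f0_le_m M_le_m t t_ge0; rewrite leNgt; apply/negP => m_lt_ft.
have t_gt0 : 0 < t.
  by rewrite lt_neqAle t_ge0 andbT; apply: contraTneq m_lt_ft => <-; rewrite -leNgt.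
have f_cont_0t : {within `[0, t], continuous f}.
  apply/continuous_within_itvP => //; split.
  - by move=> x; rewrite in_itv /= => /andP[x_gt0 _]; apply: f_cont.
  - exact: f_cont0.
  - exact: cvg_at_left_filter (f_cont t_gt0).
have [s s_in s_max] := EVT_max (ltW t_gt0) f_cont_0t.
have m_lt_fs : m < f s.
  by apply: (lt_le_trans m_lt_ft); apply: s_max; rewrite in_itv /= t_ge0 lexx.
have s_gt0 : 0 < s.
  move: s_in; rewrite in_itv /= le_eqVlt => /andP[/predU1P[s0|//] _].
  by move: m_lt_fs; rewrite -s0 ltNge f0_le_m.
have [x /andP[x_gt0 x_lt_s]] := gt_left_of_derive_lt0 s_gt0 (le_lt_trans M_le_m m_lt_fs).
apply/negP; rewrite -leNgt; apply: s_max.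
by move: s_in; rewrite !in_itv /= (ltW x_gt0) => /andP[_ /(le_trans (ltW x_lt_s))].
Qed.

End DecreasingAboveLevel.

Theorem lemma4p6 (R : realType) (N : nat) (K : R) (r : 'I_N -> R)
  (mu : 'I_N -> 'I_N -> R) (alpha : ('I_N -> R) -> R)
  (vbar : 'I_N -> R) (v : R -> 'I_N -> R) :
  (1 <= N)%N -> 0 < K -> (forall i, 0 < r i) ->
  mx_nonneg mu -> mx_symmetric mu -> mx_irreducible mu ->
  loc_lipschitz alpha -> alpha (fun _ => 0) = 0 -> comp_monotone alpha ->
  (exists R0 : R, exists k : R, exists c : R,
     [/\ 0 < R0, 0 < k, 0 < c &
       forall w : 'I_N -> R, (forall j, 0 <= w j) ->
         R0 <= \sum_j `|w j| -> c * (\sum_j w j) `^ k <= alpha w]) ->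
  pos_stationary K r mu alpha vbar ->
  (forall w, pos_stationary K r mu alpha w -> w = vbar) ->
  pos_solution K r mu alpha v ->
  exists C1 : R, forall t, 0 <= t ->
    \sum_i (v t i) ^+ 2 + \sum_i v t i * vbar i <= C1.
Proof.
move=> _ K_gt0 r_gt0 _ mu_sym _ _ _ _ [R0 [k [c [_ k_gt0 c_gt0 alpha_growth]]]]
  [vbar_gt0 _] _ [v_gt0 [v_derive v_cont0]].
have r_ge0 i : 0 <= r i by exact: ltW.
pose S t := \sum_i v t i.
pose m := Num.max (S 0) (mass_threshold K r R0 k c).
have S_le_m : forall t, 0 <= t -> S t <= m.
  apply: (le_bound_of_derive_lt0_above (M := mass_threshold K r R0 k c)
    (df := fun t => \sum_i rhs K r mu alpha (v t) i)).
  - move=> t t_gt0.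
    by have := is_derive_sum (fun i => v_derive t t_gt0 i); rewrite fct_sumE.
  - move=> t t_gt0; apply: sum_rhs_lt0 => // i.
    exact: ltW (v_gt0 t (ltW t_gt0) i).
  - by apply: cvg_big => //; exact: add_continuous.
  - by rewrite le_max lexx.
  - by rewrite le_max lexx orbT.
exists (m * (m + \sum_i vbar i)) => t t_ge0.
have v_ge0 i : 0 <= v t i by exact: ltW (v_gt0 t t_ge0 i).
have vbar_ge0 i : 0 <= vbar i by exact: ltW.
have S_ge0 : 0 <= S t by exact: sumr_ge0.
rewrite (eq_bigr (fun i => v t i * v t i)) => [|i _]; last exact: expr2.
apply: le_trans (lerD (sum_mul_le_mul_sum v_ge0 v_ge0)
  (sum_mul_le_mul_sum v_ge0 vbar_ge0)) _.
rewrite -mulrDr; apply: ler_pM; rewrite ?lerD2r ?S_le_m //.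
by rewrite addr_ge0 ?sumr_ge0.
Qed.
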